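(* Let $x_s<x_t$ be integers, let $C\ge 0$, and let $f:[x_s,x_t]\to\mathbb{R}$ be such that $([x_s,x_t],f)$ is an Ameso($C$) pair. Suppose there exist $x^0\in[x_s,x_t]$ and a positive integer $b$ with $[x^0-b,x^0]\subseteq[x_s,x_t]$ such that $f(x^0)=\min_{y\in[x^0-b,x^0]}f(y)$ and $f(x^0)+C\le\max_{y\in[x^0-b,x^0]}f(y)$. Let $w^*=\min\{w\in[x^0-b,x^0]: f(w)=\max_{y\in[x^0-b,x^0]}f(y)\}$. Then $x^0-b\le w^*<x^0-\frac b2$.
   Context: For integers $a\le b$, $[a,b]$ denotes the set of integers $\{a,a+1,\dots,b\}$. Floors and ceilings of vectors are taken componentwise. A set $D^n\subseteq\mathbb{Z}^n$ is an Ameso set if $\lceil(\vec x+\vec y)/2\rceil,\lfloor(\vec x+\vec y)/2\rfloor\in D^n$ for all $\vec x,\vec y\in D^n$. For $C\ge 0$, $(D^n,f)$ is an Ameso($C$) pair if $D^n$ is an Ameso set, $f:D^n\to\mathbb{R}$ is bounded below, and $f(\vec x)+f(\vec y)+C\ge f(\lceil(\vec x+\vec y)/2\rceil)+f(\lfloor(\vec x+\vec y)/2\rfloor)$ for all $\vec x,\vec y\in D^n$. *)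

From Stdlib Require Import ZArith Reals.
Open Scope R_scope.

Definition Zint (a b x : Z) : Prop := (a <= x <= b)%Z.

Definition zfloor_half (z : Z) : Z := Z.div z 2.
Definition zceil_half (z : Z) : Z := (- Z.div (- z) 2)%Z.

Definition Ameso_set (D : Z -> Prop) : Prop :=
  forall x y, D x -> D y -> D (zceil_half (x + y)) /\ D (zfloor_half (x + y)).

(* Ameso(C) pair (D, f), with f defined on all of Z but only looked at on D *)
Definition Ameso_pair (C : R) (D : Z -> Prop) (f : Z -> R) : Prop :=
  Ameso_set D /\
  (exists m : R, forall x, D x -> m <= f x) /\
  (forall x y, D x -> D y ->
     f x + f y + C >= f (zceil_half (x + y)) + f (zfloor_half (x + y))).

Definition is_max_on (a b : Z) (f : Z -> R) (M : R) : Prop :=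
  (exists y, Zint a b y /\ f y = M) /\ (forall y, Zint a b y -> f y <= M).

Definition is_min_on (a b : Z) (f : Z -> R) (m : R) : Prop :=
  (exists y, Zint a b y /\ f y = m) /\ (forall y, Zint a b y -> m <= f y).

Definition is_least_with_value (a b : Z) (f : Z -> R) (M : R) (w : Z) : Prop :=
  Zint a b w /\ f w = M /\ (forall v, Zint a b v -> f v = M -> (w <= v)%Z).

(* If the least maximizer w of f on [a, x0] had 2w >= a + x0, its reflection
   y = 2w - x0 would lie in [a, x0] with w as exact midpoint of y and x0, so the
   Ameso inequality f y + f x0 + C >= 2 f w = 2M together with f x0 + C <= M
   would make y a maximizer left of w (strictly, as w < x0), contradicting
   leastness.  The case w = x0 is excluded separately: f would then be
   constant on [a, x0], making a the least maximizer. *)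
From Stdlib Require Import ZArith Reals Lra Lia.
Open Scope R_scope.

Lemma zfloor_half_double (w : Z) : zfloor_half (2 * w) = w.
Proof. unfold zfloor_half; rewrite Z.mul_comm, Z.div_mul; lia. Qed.

Lemma zceil_half_double (w : Z) : zceil_half (2 * w) = w.
Proof.
  unfold zceil_half.
  replace (- (2 * w))%Z with ((- w) * 2)%Z by lia.
  rewrite Z.div_mul; lia.
Qed.

Lemma Ameso_pair_midpoint {C : R} {D : Z -> Prop} {f : Z -> R} (x y w : Z) :
  Ameso_pair C D f -> D x -> D y -> (x + y = 2 * w)%Z ->
  f x + f y + C >= 2 * f w.
Proof.
  intros [_ [_ Hmid]] Dx Dy Hxy.
  specialize (Hmid x y Dx Dy).
  rewrite Hxy, zceil_half_double, zfloor_half_double in Hmid.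
  lra.
Qed.

Section LeastMaximizer.

Context {C : R} {D : Z -> Prop} {f : Z -> R} {a x0 : Z} {M : R} {w : Z}.
Hypothesis f_Ameso : Ameso_pair C D f.
Hypothesis interval_sub : forall y, Zint a x0 y -> D y.
Hypothesis min_at_x0 : is_min_on a x0 f (f x0).
Hypothesis max_M : is_max_on a x0 f M.
Hypothesis w_least : is_least_with_value a x0 f M w.

Lemma least_maximizer_lt_right : (a < x0)%Z -> (w < x0)%Z.
Proof.
  intros Hax.
  destruct min_at_x0 as [_ Hmin]; destruct max_M as [_ Hmax].
  destruct w_least as [Hw [HwM Hleast]]; unfold Zint in *.
  destruct (Z.eq_dec w x0) as [-> | Hne]; [exfalso | lia].
  assert (Ha : Zint a x0 a) by (unfold Zint; lia).
  assert (HaM : f a = M) by (pose proof (Hmin a Ha); pose proof (Hmax a Ha); lra).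
  pose proof (Hleast a Ha HaM); lia.
Qed.

Lemma least_maximizer_lt_midpoint :
  f x0 + C <= M -> (a < x0)%Z -> (2 * w < a + x0)%Z.
Proof.
  intros Hgap Hax.
  pose proof (least_maximizer_lt_right Hax) as Hwx.
  destruct max_M as [_ Hmax]; destruct w_least as [Hw [HwM Hleast]].
  unfold Zint in *.
  destruct (Z_lt_le_dec (2 * w) (a + x0)) as [Hlt | Hge]; [exact Hlt | exfalso].
  set (y := (2 * w - x0)%Z).
  assert (Hy : Zint a x0 y) by (unfold Zint, y; lia).
  assert (Hx0 : Zint a x0 x0) by (unfold Zint; lia).
  assert (HyM : f y = M).
  { pose proof (Ameso_pair_midpoint y x0 w f_Ameso (interval_sub y Hy)
                  (interval_sub x0 Hx0) ltac:(unfold y; lia)).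
    pose proof (Hmax y Hy); lra. }
  pose proof (Hleast y Hy HyM); unfold y in *; lia.
Qed.

End LeastMaximizer.

Theorem lemma4 (xs xt : Z) (C : R) (f : Z -> R) (x0 b : Z) (M : R) (wstar : Z) :
  (xs < xt)%Z ->
  0 <= C ->
  Ameso_pair C (Zint xs xt) f ->
  Zint xs xt x0 ->
  (0 < b)%Z ->
  (forall y, Zint (x0 - b) x0 y -> Zint xs xt y) ->
  is_min_on (x0 - b) x0 f (f x0) ->
  is_max_on (x0 - b) x0 f M ->
  f x0 + C <= M ->
  is_least_with_value (x0 - b) x0 f M wstar ->
  (x0 - b <= wstar)%Z /\ IZR wstar < IZR x0 - IZR b / 2.
Proof.
  intros _ _ Hf _ Hb Hsub Hmin Hmax Hgap Hw.
  pose proof (least_maximizer_lt_midpoint Hf Hsub Hmin Hmax Hw Hgap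
                ltac:(lia)) as Hmid.
  split; [destruct Hw as [Hw _]; unfold Zint in Hw; lia |].
  replace (x0 - b + x0)%Z with (2 * x0 - b)%Z in Hmid by lia.
  apply IZR_lt in Hmid.
  rewrite minus_IZR, !mult_IZR in Hmid; simpl in Hmid; lra.
Qed.
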